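(* Let $(\mathcal{X},W(y|x),\mathcal{Y})$ be a discrete channel, $P$ a pmf on $\mathcal{X}$, $L\ge1$, and $M\ge L+1$ integers. Let $F\colon[M]\to\mathcal{X}$ have i.i.d. values $F(m)\sim P$, and write $G=G(W)$. Then $$\Pr\{F\text{ is an }(M,L)\text{ zero-error list code for }W\}\le 1-\frac1B,$$ where $$B=\binom{M}{L+1}^{-1}2^{LI_{L+1}(G,P)}+1+\sum_{\ell=1}^L\binom{L+1}{\ell}^2\binom{M}{\ell}^{-1}2^{L\theta^{(\ell)}_{L+1}(G,P)}.$$
   Context: Notation: $[j]=\{1,\dots,j\}$, $[i:j]=\{i,\dots,j\}$; $\log$ base 2. A discrete channel has finite $\mathcal{X},\mathcal{Y}$ and pmfs $W(\cdot|x)$ on $\mathcal{Y}$. $G(W)=(\mathcal{X},\mathcal{E})$ is the hypergraph whose edges are all $e\subseteq\mathcal{X}$ with $\prod_{x\in e}W(y|x)=0$ for every $y\in\mathcal{Y}$. A map $f\colon[M]\to\mathcal{X}$ is an $(M,L)$ zero-error list code for $W$ if for every $(L+1)$-element subset $S\subseteq[M]$, $\{f(m):m\in S\}\in\mathcal{E}$. For $x_{[k]}\in\mathcal{X}^k$, $\sigma(x_{[k]})=\{x_1,\dots,x_k\}$, $P(x_S)=\prod_{j\in S}P(x_j)$. $I_{L+1}(G,P):=-\frac1L\log\sum_{x_{[L+1]}:\sigma(x_{[L+1]})\notin\mathcal{E}}P(x_{[L+1]})$ and for $\ell\in[L]$, $\theta^{(\ell)}_{L+1}(G,P):=2I_{L+1}(G,P)+\frac1L\log\sum_{x_{[\ell]}}P(x_{[\ell]})\Big[\sum_{x_{[\ell+1:L+1]}:\sigma(x_{[L+1]})\notin\mathcal{E}}P(x_{[\ell+1:L+1]})\Big]^2$.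 *)

From HB Require Import structures.
From mathcomp Require Import all_boot.
From Stdlib Require Import Reals.

Set Implicit Arguments.
Unset Strict Implicit.
Unset Printing Implicit Defensive.

Lemma Rplus_assoc' : associative Rplus.
Proof. by move=> a b c; rewrite Rplus_assoc. Qed.
Lemma Rmult_assoc' : associative Rmult.
Proof. by move=> a b c; rewrite Rmult_assoc. Qed.
HB.instance Definition _ := Monoid.isComLaw.Build R 0%R Rplus
  Rplus_assoc' Rplus_comm Rplus_0_l.
HB.instance Definition _ := Monoid.isComLaw.Build R 1%R Rmult
  Rmult_assoc' Rmult_comm Rmult_1_l.

Definition Rzerob (x : R) : bool := if Req_EM_T x 0%R then true else false.

Definition log2 (x : R) : R := (ln x / ln 2)%R.
Definition pow2 (x : R) : R := Rpower 2 x.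

Section Defs.
Variables (X Y : finType).

Definition is_channel (W : X -> Y -> R) : Prop :=
  (forall x y, (0 <= W x y)%R) /\ (forall x, \big[Rplus/0%R]_(y : Y) W x y = 1%R).

Definition is_pmf (P : X -> R) : Prop :=
  (forall x, (0 <= P x)%R) /\ \big[Rplus/0%R]_(x : X) P x = 1%R.

(* edges of the hypergraph G(W): subsets e with prod_{x in e} W(y|x) = 0 for all y *)
Definition is_edge (W : X -> Y -> R) (e : {set X}) : bool :=
  [forall y : Y, Rzerob (\big[Rmult/1%R]_(x in e) W x y)].

Definition is_list_code (W : X -> Y -> R) (M L : nat) (f : {ffun 'I_M -> X}) : bool :=
  [forall S : {set 'I_M}, (#|S| == L.+1) ==> is_edge W (f @: S)].
Arguments is_list_code W M L f : clear implicits.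

Definition sigma k (x : {ffun 'I_k -> X}) : {set X} := [set x i | i : 'I_k].

Definition Pprod (P : X -> R) k (x : {ffun 'I_k -> X}) : R :=
  \big[Rmult/1%R]_(i : 'I_k) P (x i).

Definition nonedge_mass (W : X -> Y -> R) (P : X -> R) (L : nat) : R :=
  \big[Rplus/0%R]_(x : {ffun 'I_L.+1 -> X} | ~~ is_edge W (sigma x)) Pprod P x.

Definition I_L1 (W : X -> Y -> R) (P : X -> R) (L : nat) : R :=
  (- (1 / INR L) * log2 (nonedge_mass W P L))%R.

(* sum_{x_[l]} P(x_[l]) [ sum_{x_[l+1:L+1] : sigma(x_[L+1]) not edge} P(x_[l+1:L+1]) ]^2 ;
   the tuple x_[L+1] is split into its first l coordinates (a) and the
   remaining L+1-l coordinates (b). *)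
Definition theta_mass (W : X -> Y -> R) (P : X -> R) (L l : nat) : R :=
  \big[Rplus/0%R]_(a : {ffun 'I_l -> X})
    (Pprod P a *
     (\big[Rplus/0%R]_(b : {ffun 'I_(L.+1 - l) -> X}
                        | ~~ is_edge W (sigma a :|: sigma b)) Pprod P b) ^ 2)%R.

Definition theta_L1 (W : X -> Y -> R) (P : X -> R) (L l : nat) : R :=
  (2 * I_L1 W P L + (1 / INR L) * log2 (theta_mass W P L l))%R.

Definition B_bound (W : X -> Y -> R) (P : X -> R) (M L : nat) : R :=
  (/ INR 'C(M, L.+1) * pow2 (INR L * I_L1 W P L) + 1 +
   \big[Rplus/0%R]_(1 <= l < L.+1)
      (INR 'C(L.+1, l) ^ 2 * / INR 'C(M, l) * pow2 (INR L * theta_L1 W P L l)))%R.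

Definition prob_list_code (W : X -> Y -> R) (P : X -> R) (M L : nat) : R :=
  \big[Rplus/0%R]_(f : {ffun 'I_M -> X} | is_list_code W M L f)
     \big[Rmult/1%R]_(m : 'I_M) P (f m).

End Defs.

(* Second moment method.  Let N(F) count the (L+1)-sets of messages whose codewords do not
   form an edge of G(W); F is a list code iff N(F) = 0, and P(N > 0) >= E[N]^2 / E[N^2].
   By linearity E[N] = C(M, L+1) q, where q = 2^(-L I_{L+1}) is the non-edge mass.  A pair
   of (L+1)-sets meeting in l messages contributes the theta-mass at l to E[N^2], and at most
   C(L+1, l)^2 C(M, L+1) / C(M, l) sets meet a given one in l messages; hence
   E[N^2] / E[N]^2 <= B. *)

(* Reals first, so that the ssrnat notations [<=] and [^] take precedence on nat. *)
From Stdlib Require Import Reals Lra.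
From HB Require Import structures.
From mathcomp Require Import all_boot zify.

Set Implicit Arguments.
Unset Strict Implicit.
Unset Printing Implicit Defensive.

Lemma bin_mul_sub n k l : l <= k -> k <= n ->
  'C(n, k) * 'C(k, l) = 'C(n, l) * 'C(n - l, k - l).
Proof.
move=> le_lk le_kn; have le_ln := leq_trans le_lk le_kn.
have facts_gt0 : 0 < l`! * (k - l)`! * (n - k)`! by rewrite !muln_gt0 !fact_gt0.
apply/eqP; rewrite -(eqn_pmul2r facts_gt0); apply/eqP.
have sub_kl : n - l - (k - l) = n - k by rewrite subnBA // subnK.
have := bin_fact le_kn; have := bin_fact le_lk; have := bin_fact le_ln.
have := bin_fact (leq_sub2r l le_kn); rewrite sub_kl.
nia.
Qed.

Lemma card_ksets_meet (T : finType) (S : {set T}) l : l <= #|S| -> #|S| <= #|T| ->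
  #|[set A : {set T} | (#|A| == #|S|) && (#|S :&: A| == l)]| * 'C(#|T|, l)
    <= 'C(#|S|, l) ^ 2 * 'C(#|T|, #|S|).
Proof.
move=> le_lS le_ST; set D := [set A | _].
pose split_by_S (A : {set T}) := (S :&: A, A :\: S).
have split_inj : injective split_by_S.
  by move=> A1 A2 [eqI eqD]; rewrite -(setID A1 S) -(setID A2 S) !(setIC _ S) eqI eqD.
have split_D : split_by_S @: D \subset
    setX [set B : {set T} | B \subset S & #|B| == l]
         [set B : {set T} | B \subset ~: S & #|B| == #|S| - l].
  apply/subsetP => ? /imsetP [A]; rewrite inE => /andP [/eqP cardA /eqP cardSA] ->.
  rewrite !inE /= subsetIl cardSA eqxx cardsD setIC cardSA cardA eqxx /= andbT.
  by apply/subsetP => x; rewrite !inE => /andP [].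
have card_D : #|D| <= 'C(#|S|, l) * 'C(#|T| - l, #|S| - l).
  rewrite -(card_imset _ split_inj); apply: leq_trans (subset_leq_card split_D) _.
  rewrite cardsX !cards_draws leq_mul2l leq_bin2l ?orbT // -(cardsC S).
  lia.
apply: leq_trans (leq_mul card_D (leqnn _)) _.
by rewrite -mulnA [_ * 'C(#|T|, l)]mulnC -bin_mul_sub // mulnCA mulnC mulnn.
Qed.

Lemma card_setI_lt (T : finType) (A B : {set T}) :
  #|A| = #|B| -> A != B -> #|A :&: B| < #|A|.
Proof.
move=> card_AB ne_AB; rewrite ltn_neqAle subset_leq_card ?subsetIl // andbT.
apply: contraNneq ne_AB => card_AIB.
have AIB_A : A :&: B = A by apply/eqP; rewrite eqEcard subsetIl card_AIB leqnn.
have sub_AB : A \subset B by rewrite -AIB_A subsetIr.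
by rewrite eqEcard sub_AB card_AB leqnn.
Qed.

Open Scope R_scope.

HB.instance Definition _ := Monoid.isMulLaw.Build R 0 Rmult Rmult_0_l Rmult_0_r.
HB.instance Definition _ :=
  Monoid.isAddLaw.Build R Rmult Rplus Rmult_plus_distr_r Rmult_plus_distr_l.

Lemma sumR_le (I : Type) (r : seq I) (Q : pred I) (F G : I -> R) :
  (forall i, Q i -> F i <= G i) ->
  \big[Rplus/0]_(i <- r | Q i) F i <= \big[Rplus/0]_(i <- r | Q i) G i.
Proof. by move=> leFG; elim/big_ind2: _ => // *; lra. Qed.

Lemma sumR_ge0 (I : Type) (r : seq I) (Q : pred I) (F : I -> R) :
  (forall i, Q i -> 0 <= F i) -> 0 <= \big[Rplus/0]_(i <- r | Q i) F i.
Proof. by move=> F_ge0; elim/big_ind: _ => // *; lra. Qed.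

Lemma sumR_const (I : finType) (Q : pred I) (c : R) :
  \big[Rplus/0]_(i | Q i) c = INR #|Q| * c.
Proof.
rewrite big_const; elim: #|Q| => [|n IHn]; first by rewrite /=; lra.
by rewrite iterS IHn S_INR; lra.
Qed.

Definition indR (b : bool) : R := if b then 1 else 0.

Lemma indR_mul_id b : indR b * indR b = indR b.
Proof. by case: b => /=; lra. Qed.

Lemma prodR_indR (J : finType) (b : J -> bool) :
  \big[Rmult/1]_(j : J) indR (b j) = indR [forall j, b j].
Proof.
case: (boolP [forall j, b j]) => [/forallP b_all | /forallPn [j0 /negbTE b_j0]].
  by rewrite big1 // => j _; rewrite b_all.
by rewrite (bigD1 j0) //= b_j0 Rmult_0_l.
Qed.

Lemma sumR_mkcond (I : finType) (Q : pred I) (F : I -> R) :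
  \big[Rplus/0]_(i | Q i) F i = \big[Rplus/0]_i (F i * indR (Q i)).
Proof. by rewrite big_mkcond; apply: eq_bigr => i _; case: (Q i) => /=; lra. Qed.

Lemma prod_pick_inj (I J : finType) (h : J -> I) (F : J -> R) : injective h ->
  \big[Rmult/1]_(i : I) (if [pick j | h j == i] is Some j then F j else 1)
    = \big[Rmult/1]_(j : J) F j.
Proof.
move=> h_inj; rewrite [RHS](partition_big h xpredT) //=.
apply: eq_bigr => i _; case: pickP => [j /eqP hj | no_preim]; last by rewrite big_pred0.
by rewrite (big_pred1 j) // => j'; rewrite -hj; apply/eqP/eqP => [/h_inj | ->].
Qed.

Definition sum_case (A B T : Type) (g1 : A -> T) (g2 : B -> T) (s : A + B) : T :=
  match s with inl a => g1 a | inr b => g2 b end.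

Lemma sum_case_inj (A B T : Type) (g1 : A -> T) (g2 : B -> T) :
  injective g1 -> injective g2 -> (forall a b, g1 a <> g2 b) -> injective (sum_case g1 g2).
Proof.
move=> g1_inj g2_inj g12 [a1|b1] [a2|b2] //= eq12.
- by rewrite (g1_inj _ _ eq12).
- by case: (g12 _ _ eq12).
- by case: (g12 _ _ (esym eq12)).
- by rewrite (g2_inj _ _ eq12).
Qed.

Lemma overlap_weight_ge0 n m l : 0 <= INR 'C(n, l) ^ 2 * / INR 'C(m, l).
Proof.
apply: Rmult_le_pos; first exact: pow2_ge_0.
by case: (posnP 'C(m, l)) => [-> | /ltP/lt_0_INR/Rinv_0_lt_compat]; rewrite ?Rinv_0; lra.
Qed.

Section ProductMeasure.
Variables (X : finType) (P : X -> R).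

(* [Pprod] of the definitions is the case [J = 'I_k]; the two are convertible. *)
Definition pprod (J : finType) (x : {ffun J -> X}) : R := \big[Rmult/1]_(j : J) P (x j).

Definition ffun_join (A B : finType) (a : {ffun A -> X}) (b : {ffun B -> X}) :
  {ffun A + B -> X} := [ffun s => sum_case a b s].

Lemma ffun_join_inl (A B : finType) (a : {ffun A -> X}) (b : {ffun B -> X}) i :
  ffun_join a b (inl i) = a i.
Proof. by rewrite ffunE. Qed.

Lemma ffun_join_inr (A B : finType) (a : {ffun A -> X}) (b : {ffun B -> X}) i :
  ffun_join a b (inr i) = b i.
Proof. by rewrite ffunE. Qed.

Lemma sum_pprod_join (A B : finType) (G : {ffun A + B -> X} -> R) :
  \big[Rplus/0]_(x : {ffun A + B -> X}) (pprod x * G x)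
  = \big[Rplus/0]_(a : {ffun A -> X}) \big[Rplus/0]_(b : {ffun B -> X})
      (pprod a * pprod b * G (ffun_join a b)).
Proof.
rewrite pair_bigA (reindex (fun ab => ffun_join ab.1 ab.2)) /=.
  apply: eq_bigr => -[a b] _ /=; congr (_ * _).
  by rewrite /pprod big_sumType; congr (_ * _); apply: eq_bigr => i _;
    rewrite (ffun_join_inl, ffun_join_inr).
exists (fun x => ([ffun a => x (inl a)], [ffun b => x (inr b)])) => [[a b] _ | x _] /=.
  by congr pair; apply/ffunP => i; rewrite !ffunE.
by apply/ffunP => -[i|i]; rewrite (ffun_join_inl, ffun_join_inr) ffunE.
Qed.

Hypothesis P_ge0 : forall x, 0 <= P x.
Hypothesis P_sum1 : \big[Rplus/0]_(x : X) P x = 1.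

Lemma pprod_ge0 (J : finType) (x : {ffun J -> X}) : 0 <= pprod x.
Proof. by rewrite /pprod; elim/big_ind: _ => // *; [lra | exact: Rmult_le_pos]. Qed.

Lemma sum_pprod (J : finType) : \big[Rplus/0]_(x : {ffun J -> X}) pprod x = 1.
Proof.
rewrite /pprod -(bigA_distr_bigA (fun (j : J) (y : X) => P y)).
by rewrite big1.
Qed.

Section Marginal.
Variables (I J : finType) (h : J -> I).
Hypothesis h_inj : injective h.

Lemma sum_pprod_restrict_eq (x : {ffun J -> X}) :
  \big[Rplus/0]_(f : {ffun I -> X}) (pprod f * indR ([ffun j => f (h j)] == x)) = pprod x.
Proof.
(* The indicator factorizes over the coordinates of f; the coordinates outside
   the range of h carry the factor 1 and sum out to 1. *)
pose c i y := P y * (if [pick j | h j == i] is Some j then indR (y == x j) else 1).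
transitivity (\big[Rplus/0]_(f : {ffun I -> X}) \big[Rmult/1]_i c i (f i)).
  apply: eq_bigr => f _; rewrite /c big_split /=; congr (_ * _).
  transitivity (\big[Rmult/1]_i
      (if [pick j | h j == i] is Some j then indR (f (h j) == x j) else 1)).
    rewrite prod_pick_inj // prodR_indR; congr indR.
    apply/eqP/forallP => [<- j | eq_fx]; first by rewrite ffunE.
    by apply/ffunP => j; rewrite ffunE; apply/eqP.
  by apply: eq_bigr => i _; case: pickP => // j /eqP ->.
rewrite -(bigA_distr_bigA c) /pprod -(prod_pick_inj _ h_inj).
apply: eq_bigr => i _; rewrite /c; case: pickP => [j _ | _].
  rewrite (bigD1 (x j)) //= eqxx Rmult_1_r big1 ?Rplus_0_r // => y /negbTE -> /=.
  exact: Rmult_0_r.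
by under eq_bigr do rewrite Rmult_1_r.
Qed.

Lemma sum_pprod_restrict (G : {ffun J -> X} -> R) :
  \big[Rplus/0]_(f : {ffun I -> X}) (pprod f * G [ffun j => f (h j)])
  = \big[Rplus/0]_(x : {ffun J -> X}) (pprod x * G x).
Proof.
transitivity (\big[Rplus/0]_(f : {ffun I -> X}) \big[Rplus/0]_(x : {ffun J -> X})
    (pprod f * indR ([ffun j => f (h j)] == x) * G x)).
  apply: eq_bigr => f _.
  rewrite (bigD1 [ffun j => f (h j)]) //= eqxx Rmult_1_r big1 ?Rplus_0_r //.
  by move=> y; rewrite eq_sym => /negbTE -> /=; rewrite Rmult_0_r Rmult_0_l.
by rewrite exchange_big; apply: eq_bigr => x _; rewrite -big_distrl /= sum_pprod_restrict_eq.
Qed.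

End Marginal.
End ProductMeasure.

Section SetEnum.
Variables (T : finType) (S : {set T}) (n : nat).
Hypothesis card_S : #|S| = n.

Definition set_enum (i : 'I_n) : T := enum_val (cast_ord (esym card_S) i).

Lemma set_enum_inj : injective set_enum.
Proof. by move=> i j /enum_val_inj /cast_ord_inj. Qed.

Lemma set_enum_mem i : set_enum i \in S.
Proof. exact: enum_valP. Qed.

Lemma sigma_set_enum (X : finType) (f : T -> X) (x : {ffun 'I_n -> X}) :
  (forall i, x i = f (set_enum i)) -> sigma x = f @: S.
Proof.
move=> x_def; apply/setP => y; apply/imsetP/imsetP => [[i _ ->] | [t t_S ->]].
  by exists (set_enum i); rewrite ?x_def ?set_enum_mem.
exists (cast_ord card_S (enum_rank_in t_S t)) => //.
by rewrite x_def /set_enum cast_ordK enum_rankK_in.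
Qed.

End SetEnum.

Arguments set_enum_inj {T S n} card_S.
Arguments sigma_set_enum {T S n} card_S {X} f {x}.

Section NonedgeCount.
Variables (X Y : finType) (W : X -> Y -> R) (P : X -> R) (M L : nat).

Local Notation nonedge A := (~~ is_edge W A).
Local Notation q := (nonedge_mass W P L).
Local Notation theta l := (theta_mass W P L l).

Hypothesis P_ge0 : forall x, 0 <= P x.

Lemma theta_mass_ge0 l : 0 <= theta l.
Proof.
apply: sumR_ge0 => a _; apply: Rmult_le_pos; last exact: pow2_ge_0.
exact: pprod_ge0.
Qed.

Lemma theta_mass0 : theta 0 = q ^ 2.
Proof.
have a0 : {ffun 'I_0 -> X} by apply: finfun => -[].
rewrite /theta_mass (big_pred1 a0) => [|a]; last first.
  by apply/esym/eqP/ffunP => -[].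
have -> : sigma a0 = set0 by apply/setP => y; rewrite inE; apply/imsetP => -[[]].
by rewrite /Pprod big_ord0 Rmult_1_l; under eq_bigl do rewrite set0U.
Qed.

Hypothesis P_sum1 : \big[Rplus/0]_(x : X) P x = 1.

Lemma mean_nonedge_set (S : {set 'I_M}) : #|S| = L.+1 ->
  \big[Rplus/0]_(f : {ffun 'I_M -> X}) (pprod P f * indR (nonedge (f @: S))) = q.
Proof.
move=> card_S.
transitivity (\big[Rplus/0]_(f : {ffun 'I_M -> X})
    (pprod P f * indR (nonedge (sigma [ffun j => f (set_enum card_S j)])))).
  by apply: eq_bigr => f _; rewrite (sigma_set_enum card_S f) // => j; rewrite ffunE.
rewrite (sum_pprod_restrict P_sum1 (set_enum_inj card_S)
  (fun x => indR (nonedge (sigma x)))).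
by rewrite /nonedge_mass [RHS]sumR_mkcond.
Qed.

Lemma mean_nonedge_pair (S T : {set 'I_M}) : #|S| = L.+1 -> #|T| = L.+1 ->
  \big[Rplus/0]_(f : {ffun 'I_M -> X})
     (pprod P f * (indR (nonedge (f @: S)) * indR (nonedge (f @: T))))
  = theta #|S :&: T|.
Proof.
move=> card_S card_T; set l := #|S :&: T|.
have card_ST : #|S :&: T| = l by [].
have card_SdT : #|S :\: T| = (L.+1 - l)%N by rewrite cardsD card_S.
have card_TdS : #|T :\: S| = (L.+1 - l)%N by rewrite cardsD setIC card_T.
(* Enumerate S :&: T, S :\: T and T :\: S in three disjoint blocks. *)
pose eS := sum_case (set_enum card_ST) (set_enum card_SdT).
pose h := sum_case eS (set_enum card_TdS).
have eS_S s : eS s \in S.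
  by case: s => i; [move: (set_enum_mem card_ST i) | move: (set_enum_mem card_SdT i)];
    rewrite !inE => /andP [].
have h_inj : injective h.
  apply: sum_case_inj; last 2 first.
  - exact: set_enum_inj.
  - move=> s i eq_si; have := eS_S s; have := set_enum_mem card_TdS i.
    by rewrite -eq_si !inE => /andP [/negP].
  apply: sum_case_inj; try exact: set_enum_inj.
  move=> i j eq_ij; have := set_enum_mem card_ST i; have := set_enum_mem card_SdT j.
  by rewrite -eq_ij !inE => /andP [/negP not_T _] /andP [_ /not_T].
pose G3 (a : {ffun 'I_l -> X}) (b c : {ffun 'I_(L.+1 - l)%N -> X}) :=
  indR (nonedge (sigma a :|: sigma b)) * indR (nonedge (sigma a :|: sigma c)).
pose G (x : {ffun 'I_l + 'I_(L.+1 - l)%N + 'I_(L.+1 - l)%N -> X}) :=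
  G3 [ffun j => x (inl (inl j))] [ffun j => x (inl (inr j))] [ffun j => x (inr j)].
transitivity (\big[Rplus/0]_(f : {ffun 'I_M -> X}) (pprod P f * G [ffun i => f (h i)])).
  apply: eq_bigr => f _; rewrite /G /G3.
  rewrite (sigma_set_enum card_ST f); last by move=> j; rewrite !ffunE.
  rewrite (sigma_set_enum card_SdT f); last by move=> j; rewrite !ffunE.
  rewrite (sigma_set_enum card_TdS f); last by move=> j; rewrite !ffunE.
  by rewrite -!imsetU setID [S :&: T]setIC setID.
rewrite (sum_pprod_restrict P_sum1 h_inj) sum_pprod_join.
transitivity (\big[Rplus/0]_(ab : {ffun _ -> X}) (pprod P ab *
   \big[Rplus/0]_(c : {ffun 'I_(L.+1 - l)%N -> X}) (pprod P c * G (ffun_join ab c)))).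
  by apply: eq_bigr => ab _; rewrite big_distrr; apply: eq_bigr => c _; rewrite Rmult_assoc.
rewrite sum_pprod_join /theta_mass; apply: eq_bigr => a _.
rewrite [in RHS]sumR_mkcond /= Rmult_1_r big_distrlr big_distrr; apply: eq_bigr => b _.
rewrite !big_distrr; apply: eq_bigr => c _.
rewrite /G /G3.
have join_a : [ffun j => ffun_join (ffun_join a b) c (inl (inl j))] = a.
  by apply/ffunP => j; rewrite ffunE !ffun_join_inl.
have join_b : [ffun j => ffun_join (ffun_join a b) c (inl (inr j))] = b.
  by apply/ffunP => j; rewrite ffunE ffun_join_inl ffun_join_inr.
have join_c : [ffun j => ffun_join (ffun_join a b) c (inr j)] = c.
  by apply/ffunP => j; rewrite ffunE ffun_join_inr.
rewrite join_a join_b join_c.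
rewrite -[Pprod P a]/(pprod P a) -[Pprod P b]/(pprod P b) -[Pprod P c]/(pprod P c) /=.
ring.
Qed.

Local Notation C := (INR 'C(M, L.+1)).

Definition nonedge_count (f : {ffun 'I_M -> X}) : R :=
  \big[Rplus/0]_(S : {set 'I_M} | #|S| == L.+1) indR (nonedge (f @: S)).

Lemma card_ksets_ord : #|[pred S : {set 'I_M} | #|S| == L.+1]| = 'C(M, L.+1).
Proof. by rewrite -[M in 'C(M, _)]card_ord -card_draws; apply: eq_card => S; rewrite !inE. Qed.

Lemma mean_nonedge_count :
  \big[Rplus/0]_(f : {ffun 'I_M -> X}) (pprod P f * nonedge_count f) = C * q.
Proof.
under eq_bigr do rewrite /nonedge_count big_distrr.
rewrite exchange_big /= -card_ksets_ord -sumR_const.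
by apply: eq_bigr => S /eqP card_S; apply: mean_nonedge_set.
Qed.

Definition overlap_sum : R :=
  \big[Rplus/0]_(0 <= l < L.+1) (INR 'C(L.+1, l) ^ 2 * / INR 'C(M, l) * theta l).

Lemma overlap_sum_ge0 : 0 <= overlap_sum.
Proof.
apply: sumR_ge0 => l _; apply: Rmult_le_pos; first exact: overlap_weight_ge0.
exact: theta_mass_ge0.
Qed.

Hypothesis le_L1_M : (L.+1 <= M)%N.

Lemma card_overlap_theta (S : {set 'I_M}) l : #|S| = L.+1 -> (l <= L)%N ->
  INR #|[set T : {set 'I_M} | (#|T| == L.+1) && (#|S :&: T| == l)]| * theta l
    <= C * (INR 'C(L.+1, l) ^ 2 * / INR 'C(M, l) * theta l).
Proof.
move=> card_S le_lL.
have CMl_gt0 : 0 < INR 'C(M, l).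
  by apply/lt_0_INR/ltP; rewrite bin_gt0 (leq_trans le_lL) // ltnW.
have := @card_ksets_meet _ S l; rewrite card_S card_ord.
move=> /(_ (leqW le_lL) le_L1_M); rewrite -mulnn => /leP/le_INR.
rewrite !mult_INR => cnt_mul_le.
have cnt_le : INR #|[set T : {set 'I_M} | (#|T| == L.+1) && (#|S :&: T| == l)]|
    <= INR 'C(L.+1, l) ^ 2 * C / INR 'C(M, l).
  apply: (Rmult_le_reg_r _ _ _ CMl_gt0).
  by rewrite /Rdiv Rmult_assoc Rinv_l; lra.
have theta_ge0 := theta_mass_ge0 l.
apply: Rle_trans (Rmult_le_compat_r _ _ _ theta_ge0 cnt_le) _.
by right; field; lra.
Qed.

Lemma sum_mean_nonedge_pair (S : {set 'I_M}) : #|S| = L.+1 ->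
  \big[Rplus/0]_(T : {set 'I_M} | #|T| == L.+1) \big[Rplus/0]_(f : {ffun 'I_M -> X})
     (pprod P f * (indR (nonedge (f @: S)) * indR (nonedge (f @: T))))
  <= q + C * overlap_sum.
Proof.
move=> card_S; rewrite (bigD1 S) /=; last by rewrite card_S.
under eq_bigr do rewrite indR_mul_id.
rewrite (mean_nonedge_set card_S); apply: Rplus_le_compat_l.
have meet_lt (T : {set 'I_M}) : (#|T| == L.+1) && (T != S) -> (#|S :&: T| < L.+1)%N.
  by case/andP => /eqP card_T ne_TS; rewrite -card_S card_setI_lt // 1?eq_sym // card_T.
rewrite (eq_bigr (fun T => theta #|S :&: T|)); last first.
  by move=> T /andP [/eqP card_T _]; apply: mean_nonedge_pair.
rewrite (partition_big (fun T => inord #|S :&: T| : 'I_L.+1) xpredT) //=.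
rewrite /overlap_sum big_mkord big_distrr; apply: sumR_le => l _ /=.
apply: Rle_trans (card_overlap_theta card_S (ltnSE (ltn_ord l))).
rewrite (eq_bigr (fun _ => theta l)); last first.
  by move=> T /andP [/meet_lt meet_lt_T /eqP <-]; rewrite inordK.
rewrite sumR_const; apply: Rmult_le_compat_r; first exact: theta_mass_ge0.
apply/le_INR/leP/subset_leq_card/subsetP => T; rewrite !inE.
by case/andP => /[dup] /meet_lt meet_lt_T /andP [-> _] /eqP <-; rewrite inordK // eqxx.
Qed.

Lemma mean_nonedge_count_sqr :
  \big[Rplus/0]_(f : {ffun 'I_M -> X}) (pprod P f * (nonedge_count f * nonedge_count f))
  <= C * (q + C * overlap_sum).
Proof.
transitivity (\big[Rplus/0]_(S : {set 'I_M} | #|S| == L.+1)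
    \big[Rplus/0]_(T : {set 'I_M} | #|T| == L.+1) \big[Rplus/0]_(f : {ffun 'I_M -> X})
      (pprod P f * (indR (nonedge (f @: S)) * indR (nonedge (f @: T))))).
  right; under eq_bigr do rewrite /nonedge_count big_distrlr big_distrr /=.
  rewrite exchange_big; apply: eq_bigr => S _.
  under eq_bigr do rewrite big_distrr /=.
  by rewrite exchange_big.
apply: (Rle_trans _ (\big[Rplus/0]_(S : {set 'I_M} | #|S| == L.+1) (q + C * overlap_sum))).
  by apply: sumR_le => S /eqP; apply: sum_mean_nonedge_pair.
by rewrite sumR_const card_ksets_ord; right.
Qed.

End NonedgeCount.

Lemma nonedge_count_list_code (X Y : finType) (W : X -> Y -> R) (M L : nat)
    (f : {ffun 'I_M -> X}) :
  is_list_code W L f -> nonedge_count W L f = 0.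
Proof.
move/forallP => code_f; rewrite /nonedge_count big1 // => S card_S.
by have := code_f S; rewrite card_S /= => ->.
Qed.

Lemma prob_list_code_compl (X Y : finType) (W : X -> Y -> R) (P : X -> R) (M L : nat) :
  \big[Rplus/0]_(x : X) P x = 1 ->
  prob_list_code W P M L
    = 1 - \big[Rplus/0]_(f : {ffun 'I_M -> X} | ~~ is_list_code W L f) pprod P f.
Proof.
move=> P_sum1; rewrite -(sum_pprod P_sum1 'I_M) (bigID (is_list_code W L)) /=.
by rewrite /Rminus Rplus_assoc Rplus_opp_r Rplus_0_r.
Qed.

Lemma second_moment_method (I : finType) (p N : I -> R) (Q : pred I) (B : R) :
  (forall i, 0 <= p i) -> (forall i, ~~ Q i -> N i = 0) ->
  0 < \big[Rplus/0]_i (p i * N i) -> 0 < B ->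
  \big[Rplus/0]_i (p i * (N i * N i)) <= B * (\big[Rplus/0]_i (p i * N i)) ^ 2 ->
  / B <= \big[Rplus/0]_(i | Q i) p i.
Proof.
move=> p_ge0 N_Q; set E1 := \big[Rplus/0]_i _; set E2 := \big[Rplus/0]_i _ => E1_gt0 B_gt0 E2_le.
(* Pointwise [2 t N - t^2 1_Q <= N^2] since [N] vanishes off [Q]; then take [t = B E1]. *)
have quad_le t : 2 * t * E1 - t ^ 2 * \big[Rplus/0]_(i | Q i) p i <= E2.
  have -> : 2 * t * E1 - t ^ 2 * \big[Rplus/0]_(i | Q i) p i
      = \big[Rplus/0]_i (p i * (2 * t * N i - t ^ 2 * indR (Q i))).
    transitivity (\big[Rplus/0]_i (2 * t * (p i * N i))
                  + \big[Rplus/0]_i (- t ^ 2 * (p i * indR (Q i)))).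
      by rewrite -!big_distrr sumR_mkcond /E1 /=; ring.
    by rewrite -big_split; apply: eq_bigr => i _ /=; ring.
  apply: sumR_le => i _.
  case: (boolP (Q i)) => [_ | /N_Q ->] /=; last by have := p_ge0 i; nra.
  have := p_ge0 i; have := Rle_0_sqr (N i - t); rewrite /Rsqr; nra.
have := quad_le (B * E1); have : 0 < B * E1 ^ 2 by apply: Rmult_lt_0_compat => //; nra.
move=> BE1_gt0 quad; apply: (Rmult_le_reg_l B) => //; rewrite Rinv_r; nra.
Qed.

Lemma ln2_gt0 : 0 < ln 2.
Proof. by rewrite -ln_1; apply: ln_increasing; lra. Qed.

Lemma pow2_opp_log2 x : 0 < x -> pow2 (- log2 x) = / x.
Proof.
move=> x_gt0; have := ln2_gt0 => ln2_gt0.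
rewrite /pow2 /Rpower /log2.
have -> : - (ln x / ln 2) * ln 2 = - ln x by field; lra.
by rewrite exp_Ropp exp_ln.
Qed.

(* Equality when [t > 0]; for [t = 0] the junk value [ln 0 = 0] keeps the bound true. *)
Lemma ratio_sqr_le_pow2_log2 x t : 0 < x -> 0 <= t ->
  t / x ^ 2 <= pow2 (-2 * log2 x + log2 t).
Proof.
move=> x_gt0 t_ge0; have := ln2_gt0 => ln2_gt0.
rewrite /pow2 /Rpower /log2.
case: (Rle_lt_or_eq_dec 0 t t_ge0) => [t_gt0 | <-]; last first.
  by rewrite /Rdiv Rmult_0_l; left; apply: exp_pos.
have -> : (-2 * (ln x / ln 2) + ln t / ln 2) * ln 2 = - ln x + - ln x + ln t by field; lra.
by rewrite !exp_plus exp_Ropp !exp_ln //; right; field; lra.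
Qed.

Section BoundB.
Variables (X Y : finType) (W : X -> Y -> R) (P : X -> R) (M L : nat).
Hypothesis P_ge0 : forall x, 0 <= P x.
Hypothesis L_gt0 : (0 < L)%N.
Hypothesis q_gt0 : 0 < nonedge_mass W P L.

Local Notation q := (nonedge_mass W P L).
Local Notation C := (INR 'C(M, L.+1)).

Lemma B_bound_ge : / C * / q + overlap_sum W P M L / q ^ 2 <= B_bound W P M L.
Proof.
have L_neq0 : INR L <> 0 by apply: not_0_INR => L0; move: L_gt0; rewrite L0.
have q2_gt0 : 0 < q ^ 2 by apply: pow_lt.
have -> : overlap_sum W P M L / q ^ 2 = 1 + \big[Rplus/0]_(1 <= l < L.+1)
    (INR 'C(L.+1, l) ^ 2 * / INR 'C(M, l) * theta_mass W P L l / q ^ 2).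
  rewrite /overlap_sum big_ltn // theta_mass0 !bin0; change (INR 1) with 1.
  rewrite /Rdiv Rmult_plus_distr_r.
  by rewrite big_distrl; congr (_ + _); field; lra.
rewrite /B_bound -Rplus_assoc; apply: Rplus_le_compat.
  have -> : INR L * I_L1 W P L = - log2 q by rewrite /I_L1; field.
  by rewrite pow2_opp_log2 //; lra.
apply: sumR_le => l _.
have -> : INR L * theta_L1 W P L l = -2 * log2 q + log2 (theta_mass W P L l).
  by rewrite /theta_L1 /I_L1; field.
have := overlap_weight_ge0 L.+1 M l; set w := _ * / _ => weight_ge0.
rewrite /Rdiv Rmult_assoc; apply: Rmult_le_compat_l => //.
exact: ratio_sqr_le_pow2_log2 (theta_mass_ge0 _ _ P_ge0 _).
Qed.

End BoundB.

Theorem mainTheorem11 (X Y : finType) (W : X -> Y -> R) (P : X -> R) (M L : nat)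
  (hW : is_channel W) (hP : is_pmf P)
  (hL : (1 <= L)%N) (hM : (L.+1 <= M)%N)
  (hpos : (0 < nonedge_mass W P L)%R) :
  (prob_list_code W P M L <= 1 - / B_bound W P M L)%R.
Proof.
case: hP => P_ge0 P_sum1.
set q := nonedge_mass W P L; set C := INR 'C(M, L.+1); set B := B_bound W P M L.
have C_gt0 : 0 < C by apply/lt_0_INR/ltP; rewrite bin_gt0.
have q_gt0 : 0 < q := hpos.
have q2_gt0 : 0 < q ^ 2 by apply: pow_lt.
have mean_N := mean_nonedge_count W M L P_sum1.
have B_ge := B_bound_ge M P_ge0 hL hpos.
have overlap_ge0 := overlap_sum_ge0 W M L P_ge0.
have B_gt0 : 0 < B.
  apply: Rlt_le_trans B_ge; apply: Rplus_lt_le_0_compat.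
    by apply: Rmult_lt_0_compat; apply: Rinv_0_lt_compat.
  by apply: Rmult_le_pos => //; apply/Rlt_le/Rinv_0_lt_compat.
rewrite prob_list_code_compl //.
suff : / B <= \big[Rplus/0]_(f : {ffun 'I_M -> X} | ~~ is_list_code W L f) pprod P f by lra.
apply: (second_moment_method (N := nonedge_count W L)) => //.
- exact: pprod_ge0.
- by move=> f /negPn /nonedge_count_list_code.
- by rewrite mean_N; apply: Rmult_lt_0_compat.
apply: Rle_trans (mean_nonedge_count_sqr W P_ge0 P_sum1 hM) _; rewrite mean_N -/q -/C.
have -> : C * (q + C * overlap_sum W P M L)
  = (/ C * / q + overlap_sum W P M L / q ^ 2) * (C * q) ^ 2 by field; split; lra.
by apply: Rmult_le_compat_r => //; apply: pow2_ge_0.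
Qed.
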